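(* $\lim_{j\to\infty}p_j^*=\lim_{j\to\infty}u_j^*=1$ and $\lim_{j\to\infty}\lambda_j^*=0$, where $\lambda_j^*=1-u_j^*$.
   Context: $\Phi$ is the partial map of $\mathbb{R}^2$ defined for $p\ne0$ by $\Phi(p,u)=\bigl(p^2(u+1)-1,\ 1/p\bigr)$. For $n\ge1$, the trajectory $T_n$ is the (existing and unique) finite sequence $(p_{j,n},u_{j,n})$, $j=0,\dots,n$, with $(p_{j,n},u_{j,n})=\Phi(p_{j-1,n},u_{j-1,n})$ for $1\le j\le n$, $u_{0,n}=0$, $p_{n,n}=0$, and $p_{j,n}>0$ for $0\le j\le n-1$. For each $j\ge0$ the limit $p_j^*=\lim_{n\to\infty}p_{j,n}$ exists, and $u_j^*=\lim_{n\to\infty}u_{j,n}=1/p_{j-1}^*$ for $j\ge1$. *)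

From Stdlib Require Import Reals.
Open Scope R_scope.

(* The partial map Phi(p,u) = (p^2 (u+1) - 1, 1/p), meaningful for p <> 0. *)
Definition Phi (x : R * R) : R * R :=
  let (p, u) := x in (p ^ 2 * (u + 1) - 1, / p).

Definition is_trajectory (n : nat) (P U : nat -> R) : Prop :=
  (forall j : nat, (1 <= j <= n)%nat -> (P j, U j) = Phi (P (j - 1)%nat, U (j - 1)%nat)) /\
  U 0%nat = 0 /\
  P n = 0 /\
  (forall j : nat, (j <= n - 1)%nat -> 0 < P j).

From Stdlib Require Import Reals Lra Lia Psatz.
Open Scope R_scope.

(* Along a trajectory, p_{j+2} - p_{j+1} = (p_{j+1}/p_j) (p_{j+1} - p_j) + (p_{j+1}^2 - 1).
   Hence an increase p_j < p_{j+1} propagates backwards while p <= 1, down to j = 0 where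
   u_0 = 0 forbids it, and forwards while p >= 1, up to j = n where p_n = 0 forbids it:
   every trajectory is nonincreasing.  In the limit, (p*_j, u*_j) is a positive
   nonincreasing orbit of Phi, so p*_j decreases to some L.  From
   p_{j+2} + 1 <= p_{j+1} + p_{j+1}^2 we get L >= 1, and then u*_{j+1} = 1/p*_j gives
   L = L^2 (1/L + 1) - 1, i.e. L^2 = 1. *)

Lemma Un_cv_const (c : R) : Un_cv (fun _ => c) c.
Proof.
  intros e He. exists 0%nat. intros n _. unfold Rdist.
  rewrite Rminus_diag, Rabs_R0. exact He.
Qed.

Lemma Un_cv_ext (a b : nat -> R) (l : R) :
  (forall n, a n = b n) -> Un_cv a l -> Un_cv b l.
Proof.
  intros Hab Ha e He. destruct (Ha e He) as [N HN].
  exists N. intros n Hn. rewrite <- Hab. exact (HN n Hn).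
Qed.

Lemma Un_cv_succ (u : nat -> R) (l : R) : Un_cv (fun n => u (S n)) l <-> Un_cv u l.
Proof.
  split; intros Hu.
  - apply (CV_shift u 1). apply (Un_cv_ext (fun n => u (S n))); auto.
    intros n. now rewrite Nat.add_1_r.
  - apply (Un_cv_ext (fun n => u (n + 1)%nat)); [intros n; now rewrite Nat.add_1_r |].
    exact (CV_shift' u 1 l Hu).
Qed.

Lemma Un_cv_pow (u : nat -> R) (l : R) (k : nat) :
  Un_cv u l -> Un_cv (fun n => u n ^ k) (l ^ k).
Proof.
  intros Hu. induction k as [|k IH].
  - exact (Un_cv_const 1).
  - exact (CV_mult _ _ _ _ Hu IH).
Qed.

Lemma Un_cv_inv (u : nat -> R) (l : R) :
  l <> 0 -> Un_cv u l -> Un_cv (fun n => / u n) (/ l).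
Proof.
  intros Hl Hu.
  exact (continuity_seq (/ id)%F u l (continuity_pt_inv id l (derivable_continuous_pt id l (derivable_pt_id l)) Hl) Hu).
Qed.

Lemma Un_cv_le_eventually (a b : nat -> R) (la lb : R) (N : nat) :
  Un_cv a la -> Un_cv b lb -> (forall n, (N <= n)%nat -> a n <= b n) -> la <= lb.
Proof.
  intros Ha Hb Hab.
  apply (@Rle_cv_lim (fun n => a (n + N)%nat) (fun n => b (n + N)%nat)).
  - intros n. apply Hab. lia.
  - exact (CV_shift' a N la Ha).
  - exact (CV_shift' b N lb Hb).
Qed.

Lemma Un_cv_eq_eventually (a b : nat -> R) (la lb : R) (N : nat) :
  Un_cv a la -> Un_cv b lb -> (forall n, (N <= n)%nat -> a n = b n) -> la = lb.
Proof.
  intros Ha Hb Hab.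
  apply Rle_antisym;
    [apply (Un_cv_le_eventually a b _ _ N) | apply (Un_cv_le_eventually b a _ _ N)]; auto;
    intros n Hn; rewrite (Hab n Hn); apply Rle_refl.
Qed.

Section Trajectory.

Variables (n : nat) (P U : nat -> R).
Hypothesis traj : is_trajectory n P U.

Lemma trajectory_step j : (j < n)%nat -> P (S j) = P j ^ 2 * (U j + 1) - 1 /\ U (S j) = / P j.
Proof.
  intros Hj. destruct traj as [Hstep _].
  specialize (Hstep (S j) ltac:(lia)). rewrite Nat.sub_succ, Nat.sub_0_r in Hstep.
  injection Hstep. auto.
Qed.

Lemma trajectory_pos j : (j < n)%nat -> 0 < P j.
Proof. intros Hj. destruct traj as (_ & _ & _ & Hpos). apply Hpos. lia. Qed.

Lemma trajectory_increment j : (S j < n)%nat ->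
  P (S (S j)) - P (S j) = P (S j) / P j * (P (S j) - P j) + (P (S j) ^ 2 - 1).
Proof.
  intros Hj. destruct (trajectory_step (S j) Hj) as [Ep _].
  destruct (trajectory_step j ltac:(lia)) as [_ Eu].
  pose proof (trajectory_pos j ltac:(lia)).
  rewrite Ep, Eu. field. lra.
Qed.

Lemma increase_propagates_backward j : (S j < n)%nat ->
  P (S j) <= 1 -> P (S j) < P (S (S j)) -> P j < P (S j).
Proof.
  intros Hj Hle Hinc. pose proof (trajectory_increment j Hj) as E.
  assert (Hr : 0 < P (S j) / P j)
    by (apply Rdiv_lt_0_compat; apply trajectory_pos; lia).
  pose proof (trajectory_pos (S j) Hj). nra.
Qed.

Lemma increase_propagates_forward j : (S j < n)%nat ->
  1 <= P (S j) -> P j < P (S j) -> P (S j) < P (S (S j)).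
Proof.
  intros Hj Hge Hinc. pose proof (trajectory_increment j Hj) as E.
  assert (Hr : 0 < P (S j) / P j)
    by (apply Rdiv_lt_0_compat; apply trajectory_pos; lia).
  nra.
Qed.

Lemma no_increase_below_one j : (j < n)%nat -> P j <= 1 -> P j < P (S j) -> False.
Proof.
  induction j as [|j IH]; intros Hj Hle Hinc.
  - destruct (trajectory_step 0 Hj) as [E _].
    destruct traj as (_ & HU0 & _). rewrite HU0 in E.
    pose proof (trajectory_pos 0 Hj). nra.
  - pose proof (increase_propagates_backward j Hj Hle Hinc).
    apply IH; lia || lra.
Qed.

Lemma increase_above_one_persists k : forall j, (S j + k <= n)%nat ->
  1 <= P (S j) -> P j < P (S j) -> 1 <= P (S j + k).
Proof.
  induction k as [|k IH]; intros j Hjk Hge Hinc.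
  - now rewrite Nat.add_0_r.
  - pose proof (increase_propagates_forward j ltac:(lia) Hge Hinc).
    replace (S j + S k)%nat with (S (S j) + k)%nat by lia.
    apply IH; lia || lra.
Qed.

Lemma trajectory_nonincreasing j : (j < n)%nat -> P (S j) <= P j.
Proof.
  intros Hj. apply Rnot_lt_le. intros Hinc.
  destruct (Rle_or_lt (P j) 1) as [Hle | Hgt].
  - exact (no_increase_below_one j Hj Hle Hinc).
  - destruct traj as (_ & _ & Hn & _).
    pose proof (increase_above_one_persists (n - S j) j ltac:(lia) ltac:(lra) Hinc) as H1.
    replace (S j + (n - S j))%nat with n in H1 by lia. lra.
Qed.

End Trajectory.

Section LimitOrbit.

Variables (p u : nat -> nat -> R) (pstar ustar : nat -> R).
Hypothesis traj : forall n, (1 <= n)%nat -> is_trajectory n (fun j => p j n) (fun j => u j n).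
Hypothesis p_cv : forall j, Un_cv (fun n => p j n) (pstar j).
Hypothesis u_cv : forall j, Un_cv (fun n => u j n) (ustar j).

Let traj_after j n : (S j < n)%nat -> is_trajectory n (fun j => p j n) (fun j => u j n).
Proof. intros Hn. apply traj. lia. Qed.

Lemma pstar_nonincreasing : Un_decreasing pstar.
Proof.
  intros j. apply (Un_cv_le_eventually _ _ _ _ (S (S j)) (p_cv (S j)) (p_cv j)).
  intros n Hn. exact (trajectory_nonincreasing n _ _ (traj_after j n ltac:(lia)) j ltac:(lia)).
Qed.

Lemma pstar_nonneg j : 0 <= pstar j.
Proof.
  apply (Un_cv_le_eventually _ _ _ _ (S (S j)) (Un_cv_const 0) (p_cv j)).
  intros n Hn. left. exact (trajectory_pos n _ _ (traj_after j n ltac:(lia)) j ltac:(lia)).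
Qed.

Lemma ustar_succ_mul_pstar j : ustar (S j) * pstar j = 1.
Proof.
  apply (Un_cv_eq_eventually (fun n => u (S j) n * p j n) _ _ _ (S (S j))
           (CV_mult _ _ _ _ (u_cv (S j)) (p_cv j)) (Un_cv_const 1)).
  intros n Hn.
  destruct (trajectory_step n _ _ (traj_after j n Hn) j ltac:(lia)) as [_ E].
  pose proof (trajectory_pos n _ _ (traj_after j n Hn) j ltac:(lia)).
  simpl in E |- *. rewrite E. field. lra.
Qed.

Lemma pstar_pos j : 0 < pstar j.
Proof.
  destruct (pstar_nonneg j) as [| E]; auto.
  pose proof (ustar_succ_mul_pstar j) as H1. rewrite <- E in H1. lra.
Qed.

Lemma pstar_ustar_orbit j : (pstar (S j), ustar (S j)) = Phi (pstar j, ustar j).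
Proof.
  assert (Hp : pstar (S j) = pstar j ^ 2 * (ustar j + 1) - 1).
  { apply (Un_cv_eq_eventually _ _ _ _ (S (S j)) (p_cv (S j))
             (CV_minus _ _ _ _ (CV_mult _ _ _ _ (Un_cv_pow _ _ 2 (p_cv j))
                                  (CV_plus _ _ _ _ (u_cv j) (Un_cv_const 1)))
                (Un_cv_const 1))).
    intros n Hn. exact (proj1 (trajectory_step n _ _ (traj_after j n Hn) j ltac:(lia))). }
  assert (Hu : ustar (S j) = / pstar j).
  { pose proof (ustar_succ_mul_pstar j). pose proof (pstar_pos j).
    apply (Rmult_eq_reg_r (pstar j)); [rewrite Rinv_l |]; lra. }
  simpl. now rewrite Hp, Hu.
Qed.

End LimitOrbit.

Section PhiOrbit.

Variables x y : nat -> R.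
Hypothesis orbit : forall j, (x (S j), y (S j)) = Phi (x j, y j).
Hypothesis x_pos : forall j, 0 < x j.
Hypothesis x_nonincreasing : Un_decreasing x.

Lemma orbit_x_succ j : x (S j) = x j ^ 2 * (y j + 1) - 1.
Proof. specialize (orbit j). simpl in orbit. now injection orbit. Qed.

Lemma orbit_y_succ j : y (S j) = / x j.
Proof. specialize (orbit j). simpl in orbit. now injection orbit. Qed.

Lemma orbit_x_succ_succ_le j : x (S (S j)) + 1 <= x (S j) + x (S j) ^ 2.
Proof.
  rewrite orbit_x_succ, orbit_y_succ.
  pose proof (x_pos j). pose proof (x_pos (S j)). pose proof (x_nonincreasing j).
  assert (x (S j) ^ 2 * / x j <= x (S j)).
  { apply (Rmult_le_reg_r (x j)); auto.
    rewrite Rmult_assoc, Rinv_l by lra. nra. }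
  lra.
Qed.

Lemma orbit_limit_ge_1 L : Un_cv x L -> 1 <= L.
Proof.
  intros HL. pose proof (proj2 (Un_cv_succ x L) HL) as HL1.
  pose proof (proj2 (Un_cv_succ (fun j => x (S j)) L) HL1) as HL2.
  assert (HL0 : 0 <= L).
  { apply (@Rle_cv_lim (fun _ => 0) x); auto using Un_cv_const.
    intros j. left. apply x_pos. }
  assert (L + 1 <= L + L ^ 2).
  { apply (Rle_cv_lim orbit_x_succ_succ_le).
    - exact (CV_plus _ _ _ _ HL2 (Un_cv_const 1)).
    - exact (CV_plus _ _ _ _ HL1 (Un_cv_pow _ _ 2 HL1)). }
  nra.
Qed.

Lemma Phi_orbit_cv : Un_cv x 1 /\ Un_cv y 1.
Proof.
  assert (Hlb : has_lb x).
  { exists 0. intros r [i ->]. unfold opp_seq. pose proof (x_pos i). lra. }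
  destruct (decreasing_cv x x_nonincreasing Hlb) as [L HL].
  pose proof (orbit_limit_ge_1 L HL) as HL_ge.
  assert (Hy : Un_cv (fun j => y (S j)) (/ L)).
  { apply (Un_cv_ext (fun j => / x j)); [intros j; now rewrite orbit_y_succ |].
    apply Un_cv_inv; [lra | exact HL]. }
  assert (Hfix : L = L ^ 2 * (/ L + 1) - 1).
  { apply (UL_sequence (fun j => x (S (S j)))).
    - apply (Un_cv_succ (fun j => x (S j))), Un_cv_succ. exact HL.
    - apply (Un_cv_ext (fun j => x (S j) ^ 2 * (y (S j) + 1) - 1));
        [intros j; now rewrite <- orbit_x_succ |].
      exact (CV_minus _ _ _ _ (CV_mult _ _ _ _ (Un_cv_pow _ _ 2 (proj2 (Un_cv_succ x L) HL))
                                (CV_plus _ _ _ _ Hy (Un_cv_const 1))) (Un_cv_const 1)). }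
  assert (HL1 : L = 1).
  { replace (L ^ 2 * (/ L + 1) - 1) with (L + L ^ 2 - 1) in Hfix by (field; lra). nra. }
  subst L. split; [exact HL |].
  apply Un_cv_succ. now rewrite Rinv_1 in Hy.
Qed.

End PhiOrbit.

Theorem mainTheorem11 (p u : nat -> nat -> R) (pstar ustar : nat -> R) :
  (forall n : nat, (1 <= n)%nat -> is_trajectory n (fun j => p j n) (fun j => u j n)) ->
  (forall j : nat, Un_cv (fun n => p j n) (pstar j)) ->
  (forall j : nat, Un_cv (fun n => u j n) (ustar j)) ->
  Un_cv pstar 1 /\ Un_cv ustar 1 /\ Un_cv (fun j => 1 - ustar j) 0.
Proof.
  intros traj p_cv u_cv.
  destruct (Phi_orbit_cv pstar ustar (pstar_ustar_orbit p u pstar ustar traj p_cv u_cv)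
              (pstar_pos p u pstar ustar traj p_cv u_cv)
              (pstar_nonincreasing p u pstar traj p_cv)) as [Hp Hu].
  split; [exact Hp | split; [exact Hu |]].
  rewrite <- (Rminus_diag 1).
  exact (CV_minus _ _ _ _ (Un_cv_const 1) Hu).
Qed.
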